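(* Fix an outer iteration $k$ of SREDA and the inner procedure described in the context. Let $g(y)=-f(x_{k+1},y)$, $\tilde y_k^*=\arg\min_yg(y)$ and $\hat u_{k,t}=-\tilde u_{k,t}$. Then $$\sum_{t=0}^m\mathbb{E}\|\nabla g(\tilde y_{k,t})\|^2\le\frac2\lambda\mathbb{E}\big[g(\tilde y_{k,0})-g(\tilde y_k^* )\big]+\sum_{t=0}^m\mathbb{E}\|\nabla g(\tilde y_{k,t})-\hat u_{k,t}\|^2-(1-\ell\lambda)\sum_{t=0}^m\mathbb{E}\|\hat u_{k,t}\|^2.$$
   Context: Problem: $f(x,y)=\mathbb{E}[F(x,y;\xi)]$ on $\mathbb{R}^{d_1}\times\mathbb{R}^{d_2}$ with (A2) $\mathbb{E}\|\nabla F(x,y;\xi)-\nabla F(x',y';\xi)\|^2\le\ell^2(\|x-x'\|^2+\|y-y'\|^2)$, (A3) $F(x,\cdot;\xi)$ concave for each $\xi,x$, (A4) $f(x,\cdot)$ $\mu$-strongly concave, and also $\max_yf(\cdot,y)$ bounded below and $\mathbb{E}\|\nabla F-\nabla f\|^2\le\sigma^2$. $G_x=\nabla_xF$, $G_y=\nabla_yF$; samples are i.i.d. copies of $\xi$ independent of everything else. Inner procedure at outer iteration $k$ (step size $\lambda>0$, batch size $S_2$, integer $m$): given $x_k,y_k$, estimates $v_k,u_k$ and $x_{k+1}$, set $\tilde x_{k,-1}=x_k,\tilde y_{k,-1}=y_k,\tilde v_{k,-1}=v_k,\tilde u_{k,-1}=u_k,\tilde x_{k,0}=x_{k+1},\tilde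 y_{k,0}=y_k$; for $t=0,\dots,m+1$ draw $S_2$ fresh samples $\xi_{t,i}$ and set $\tilde v_{k,t}=\tilde v_{k,t-1}+\frac1{S_2}\sum_i[G_x(\tilde x_{k,t},\tilde y_{k,t};\xi_{t,i})-G_x(\tilde x_{k,t-1},\tilde y_{k,t-1};\xi_{t,i})]$, $\tilde u_{k,t}=\tilde u_{k,t-1}+\frac1{S_2}\sum_i[G_y(\tilde x_{k,t},\tilde y_{k,t};\xi_{t,i})-G_y(\tilde x_{k,t-1},\tilde y_{k,t-1};\xi_{t,i})]$, $\tilde x_{k,t+1}=\tilde x_{k,t}$, $\tilde y_{k,t+1}=\tilde y_{k,t}+\lambda\tilde u_{k,t}$. *)

From HB Require Import structures.
From mathcomp Require Import all_boot all_order all_algebra.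
From mathcomp Require Import all_classical all_reals all_analysis.
Set Implicit Arguments. Unset Strict Implicit. Unset Printing Implicit Defensive.
Import Order.TTheory GRing.Theory Num.Theory.
Import numFieldNormedType.Exports.
Local Open Scope classical_set_scope.
Local Open Scope ring_scope.

Definition dotv (R : realType) (n : nat) (u v : 'rV[R]_n) : R :=
  \sum_(i < n) u 0 i * v 0 i.
Definition sqn (R : realType) (n : nat) (u : 'rV[R]_n) : R := dotv u u.

Definition is_grad2 (R : realType) (d1 d2 : nat)
  (h : 'rV[R]_d1 * 'rV[R]_d2 -> R) (z : 'rV[R]_d1 * 'rV[R]_d2)
  (gx : 'rV[R]_d1) (gy : 'rV[R]_d2) : Prop :=
  differentiable h z /\
  forall p : 'rV[R]_d1 * 'rV[R]_d2, ('d h z) p = dotv gx p.1 + dotv gy p.2.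

Definition concave_fun (R : realType) (n : nat) (h : 'rV[R]_n -> R) : Prop :=
  forall (y y' : 'rV[R]_n) (a : R), 0 <= a <= 1 ->
    (1 - a) * h y + a * h y' <= h ((1 - a) *: y + a *: y').
Definition strongly_concave (R : realType) (n : nat) (mu : R)
  (h : 'rV[R]_n -> R) : Prop :=
  forall (y y' : 'rV[R]_n) (a : R), 0 <= a <= 1 ->
    (1 - a) * h y + a * h y' + mu / 2 * a * (1 - a) * sqn (y - y')
      <= h ((1 - a) *: y + a *: y').

Definition Ex (R : realType) (d : measure_display) (T : measurableType d)
  (P : probability T R) (X : T -> R) : \bar R := (\int[P]_w (X w)%:E)%E.

(* Inner procedure of SREDA at a fixed outer iteration k, for a fixed
   realisation of the samples.  inner_state n = (x~_{k,n}, y~_{k,n}, v~_{k,n}, u~_{k,n}).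
   xk, yk, vk, uk, xk1 are x_k, y_k, v_k, u_k, x_{k+1}; xi t i is the sample xi_{t,i}. *)
Section Inner.
Variables (R : realType) (d1 d2 : nat) (Xi : Type).
Variables (Gx : 'rV[R]_d1 -> 'rV[R]_d2 -> Xi -> 'rV[R]_d1)
          (Gy : 'rV[R]_d1 -> 'rV[R]_d2 -> Xi -> 'rV[R]_d2).
Variables (lam : R) (S2 : nat) (xi : nat -> nat -> Xi).
Variables (xk : 'rV[R]_d1) (yk : 'rV[R]_d2) (vk : 'rV[R]_d1) (uk : 'rV[R]_d2)
          (xk1 : 'rV[R]_d1).

Definition corr_x (t : nat) x' y' x y : 'rV[R]_d1 :=
  (S2%:R)^-1 *: \sum_(i < S2) (Gx x' y' (xi t i) - Gx x y (xi t i)).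
Definition corr_y (t : nat) x' y' x y : 'rV[R]_d2 :=
  (S2%:R)^-1 *: \sum_(i < S2) (Gy x' y' (xi t i) - Gy x y (xi t i)).

Fixpoint inner_state (n : nat) :
    'rV[R]_d1 * 'rV[R]_d2 * 'rV[R]_d1 * 'rV[R]_d2 :=
  match n with
  | 0 => (xk1, yk, vk + corr_x 0 xk1 yk xk yk, uk + corr_y 0 xk1 yk xk yk)
  | n'.+1 =>
      let: (x, y, v, u) := inner_state n' in
      let x' := x in
      let y' := y + lam *: u in
      (x', y', v + corr_x n x' y' x y, u + corr_y n x' y' x y)
  end.

Definition ytil (n : nat) : 'rV[R]_d2 := (inner_state n).1.1.2.
Definition util (n : nat) : 'rV[R]_d2 := (inner_state n).2.
End Inner.

Definition vec_events (R : realType) (d : measure_display) (T : measurableType d)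
  (n : nat) (Z : T -> 'rV[R]_n) : set (set T) :=
  [set A | exists (i : 'I_n) (B : set R), measurable B /\
           A = (fun w => Z w 0 i) @^-1` B].

Definition indep_samples (R : realType) (d : measure_display) (T : measurableType d)
  (dX : measure_display) (Xi : measurableType dX) (P : probability T R)
  (H : set (set T)) (xi : nat -> nat -> T -> Xi) (Tmax S : nat) : Prop :=
  forall (J : seq (nat * nat)) (B : nat * nat -> set Xi) (E : set T),
    uniq J -> (forall j, j \in J -> (j.1 <= Tmax)%N /\ (j.2 < S)%N) ->
    (forall j, measurable (B j)) -> H E ->
    P (E `&` \bigcap_(j in [set j | j \in J]) (xi j.1 j.2 @^-1` B j)) =
    (P E * \prod_(j <- J) P (xi j.1 j.2 @^-1` B j))%E.

(* Everything happens pathwise; expectations are only taken at the very end,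
   using linearity and monotonicity.  Since each F(x, .; xi) is concave, the
   difference quotients of f(x, .) in a direction v are bounded by E <G_y, v>;
   applied to v and -v this shows <grad_y f, v> = E <G_y, v>, so (A2) makes
   grad_y f(x, .) ell-Lipschitz.  Summing the concavity inequality along a
   fine subdivision of [y, y + h] then gives the descent lemma
   f(x, y + h) >= f(x, y) + <grad_y f, h> - ell/2 |h|^2.  For the step
   y_{t+1} = y_t - lam uhat_t this reads
   lam/2 (|grad g|^2 + (1 - ell lam) |uhat|^2 - |grad g - uhat|^2) <= g(y_t) - g(y_{t+1}),
   which telescopes to g(y_0) - g(y_{m+1}) <= g(y_0) - g(y^* ). *)
From HB Require Import structures.
From mathcomp Require Import all_boot all_order all_algebra.
From mathcomp Require Import all_classical all_reals all_analysis.
From mathcomp Require Import measurable_realfun ring lra.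
Import Order.TTheory GRing.Theory Num.Theory.
Import numFieldNormedType.Exports.
Local Open Scope classical_set_scope.
Local Open Scope ring_scope.
Set Implicit Arguments.
Unset Strict Implicit.

Section EuclideanProduct.
Variables (R : realType) (n : nat).
Implicit Types (u v w : 'rV[R]_n) (a c : R).

Lemma dotvC u v : dotv u v = dotv v u.
Proof. by apply: eq_bigr => i _; rewrite mulrC. Qed.

Lemma dotvDl u v w : dotv (u + v) w = dotv u w + dotv v w.
Proof. by rewrite /dotv -big_split; apply: eq_bigr => i _; rewrite mxE mulrDl. Qed.

Lemma dotvZl a u v : dotv (a *: u) v = a * dotv u v.
Proof. by rewrite /dotv mulr_sumr; apply: eq_bigr => i _; rewrite mxE mulrA. Qed.

Lemma dotvNl u v : dotv (- u) v = - dotv u v.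
Proof. by rewrite -scaleN1r dotvZl mulN1r. Qed.

Lemma dotvDr u v w : dotv w (u + v) = dotv w u + dotv w v.
Proof. by rewrite !(dotvC w) dotvDl. Qed.

Lemma dotvZr a u v : dotv v (a *: u) = a * dotv v u.
Proof. by rewrite !(dotvC v) dotvZl. Qed.

Lemma dotvNr u v : dotv v (- u) = - dotv v u.
Proof. by rewrite !(dotvC v) dotvNl. Qed.

Lemma dotv0r u : dotv u 0 = 0.
Proof. by rewrite -(scale0r 0) dotvZr mul0r. Qed.

Lemma dotv_delta u (j : 'I_n) : dotv u (delta_mx 0 j) = u 0 j.
Proof.
rewrite /dotv (bigD1 j) //= big1 => [|i /negbTE ij].
  by rewrite mxE !eqxx mulr1 addr0.
by rewrite mxE ij mulr0.
Qed.

Lemma sqn_ge0 u : 0 <= sqn u.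
Proof. by apply: sumr_ge0 => i _; rewrite -expr2 sqr_ge0. Qed.

Lemma sqn0 : sqn (0 : 'rV[R]_n) = 0.
Proof. exact: dotv0r. Qed.

Lemma sqnN u : sqn (- u) = sqn u.
Proof. by rewrite /sqn dotvNl dotvNr opprK. Qed.

Lemma sqnD u v : sqn (u + v) = sqn u + 2 * dotv u v + sqn v.
Proof. by rewrite /sqn !dotvDl !dotvDr (dotvC v u); ring. Qed.

Lemma sqnZ a u : sqn (a *: u) = a ^+ 2 * sqn u.
Proof. by rewrite /sqn dotvZl dotvZr mulrA expr2. Qed.

(* Young's inequality: expand [0 <= sqn (c u + v)] and divide by [2 c]. *)
Lemma dotv_ge_young c u v : 0 < c -> - (c * sqn u + sqn v / c) / 2 <= dotv u v.
Proof.
move=> c0; have := sqn_ge0 (c *: u + v); rewrite sqnD sqnZ dotvZl => h.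
rewrite -subr_ge0 -(pmulr_rge0 _ c0).
have -> : c * (dotv u v - - (c * sqn u + sqn v / c) / 2)
          = (c ^+ 2 * sqn u + 2 * (c * dotv u v) + sqn v) / 2.
  by field; rewrite gt_eqF.
by rewrite divr_ge0.
Qed.

Lemma normr_dotv_le u v : `|dotv u v| <= sqn u + sqn v.
Proof.
have := dotv_ge_young u v ltr01; have := dotv_ge_young (- u) v ltr01.
rewrite sqnN dotvNl !mul1r !divr1 ler_norml => h1 h2.
by apply/andP; split; lra.
Qed.

End EuclideanProduct.

Lemma strongly_concave_concave (R : realType) n mu (h : 'rV[R]_n -> R) :
  0 < mu -> strongly_concave mu h -> concave_fun h.
Proof.
move=> mu0 hsc y y' a a01; apply: le_trans (hsc y y' a a01); rewrite lerDl.
case/andP: a01 => a0 a1.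
rewrite mulr_ge0 ?sqn_ge0 // mulr_ge0 ?subr_ge0 // mulr_ge0 //.
by rewrite divr_ge0 // ltW.
Qed.

Section Gradient.
Variables (R : realType) (d1 d2 : nat) (H : 'rV[R]_d1 * 'rV[R]_d2 -> R).
Implicit Types (x : 'rV[R]_d1) (y v : 'rV[R]_d2).

Lemma is_grad2_cvg p z gx gy : is_grad2 H z gx gy ->
  (fun s => (H (z + s *: p) - H z) / s) @ 0^'+ --> dotv gx p.1 + dotv gy p.2.
Proof.
move=> [dH dHE]; rewrite -dHE -deriveE //.
have := diff_derivable (v := p) dH; rewrite /derivable => /cvg_ex [l Hl].
rewrite /derive (cvg_lim _ Hl) //.
have -> : (fun s => (H (z + s *: p) - H z) / s) =
          (fun s => s^-1 *: ((H \o shift z) (s *: p) - H z)).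
  by apply/funext => s /=; rewrite mulrC [s *: p + z]addrC.
move=> A /Hl /nbhs_ballP [_ /posnumP[e] xe_A].
by exists e%:num => //= s es /gt_eqF/negbT/xe_A; exact.
Qed.

Lemma is_grad2_cvg_y v x y gx gy : is_grad2 H (x, y) gx gy ->
  (fun s => (H (x, y + s *: v) - H (x, y)) / s) @ 0^'+ --> dotv gy v.
Proof.
move=> /(is_grad2_cvg (p := (0, v))); rewrite /= dotv0r add0r.
suff -> : (fun s => (H (x, y + s *: v) - H (x, y)) / s) =
          (fun s => (H ((x, y) + s *: (0, v)) - H (x, y)) / s) by [].
apply/funext => s; congr ((H _ - _) / _).
by apply/pair_equal_spec; split; rewrite /= ?scaler0 ?addr0.
Qed.

Lemma concave_is_grad2_le v x y gx gy : is_grad2 H (x, y) gx gy ->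
  concave_fun (fun y' => H (x, y')) -> H (x, y + v) <= H (x, y) + dotv gy v.
Proof.
move=> HG Hc; rewrite -lerBlDl; apply: cvgr_to_ge (is_grad2_cvg_y (v := v) HG) _.
near=> s.
have s0 : 0 < s by near: s; exact: nbhs_right_gt.
have s1 : s <= 1 by near: s; apply: nbhs_right_le; exact: ltr01.
rewrite ler_pdivlMr //.
have := Hc y (y + v) s; rewrite (ltW s0) s1 => /(_ isT).
rewrite scalerDr addrA -scalerDl subrK scale1r.
by rewrite mulrC mulrBr; lra.
Unshelve. all: by end_near.
Qed.

End Gradient.

Section MeasurableRow.
Variables (R : realType) (d : measure_display) (T : measurableType d).

Definition measurable_rV n (A : T -> 'rV[R]_n) : Prop :=
  forall i, measurable_fun setT (fun w => A w 0 i).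

Lemma measurable_rVB n (A B : T -> 'rV[R]_n) :
  measurable_rV A -> measurable_rV B -> measurable_rV (fun w => A w - B w).
Proof.
move=> mA mB i; under eq_fun do rewrite !mxE.
exact: measurable_funB.
Qed.

Lemma measurable_rV_cst n (c : 'rV[R]_n) : measurable_rV (fun _ => c).
Proof. by move=> i; exact: measurable_cst. Qed.

Lemma measurable_dotv n (A : T -> 'rV[R]_n) v :
  measurable_rV A -> measurable_fun setT (fun w => dotv (A w) v).
Proof. by move=> mA; apply: measurable_sum => i; exact: measurable_funM. Qed.

Lemma measurable_sqn n (A : T -> 'rV[R]_n) :
  measurable_rV A -> measurable_fun setT (fun w => sqn (A w)).
Proof. by move=> mA; apply: measurable_sum => i; exact: measurable_funM. Qed.

Section GradientFamily.
Variables (d1 d2 : nat) (H : T -> 'rV[R]_d1 * 'rV[R]_d2 -> R).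
Variables (z : 'rV[R]_d1 * 'rV[R]_d2) (gx : T -> 'rV[R]_d1) (gy : T -> 'rV[R]_d2).
Hypothesis HG : forall w, is_grad2 (H w) z (gx w) (gy w).
Hypothesis mH : forall q, measurable_fun setT (H ^~ q).

(* The gradient is the pointwise limit of the measurable difference quotients
   at [s = 1/n.+1]. *)
Lemma measurable_is_grad2 p :
  measurable_fun setT (fun w => dotv (gx w) p.1 + dotv (gy w) p.2).
Proof.
apply: (measurable_fun_cvg (h := fun n w =>
  (H w (z + harmonic n *: p) - H w z) / harmonic n)).
  by move=> n; apply: measurable_funM => //; exact: measurable_funB.
move=> w _; move/cvg_at_rightP: (is_grad2_cvg (p := p) (HG w)); apply.
by split; [exact: harmonic_gt0 | exact: cvg_harmonic].
Qed.

Lemma measurable_rV_is_grad2_x : measurable_rV gx.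
Proof.
move=> i; have := measurable_is_grad2 (delta_mx 0 i, 0).
by apply: eq_measurable_fun => w _; rewrite /= dotv0r addr0 dotv_delta.
Qed.

Lemma measurable_rV_is_grad2_y : measurable_rV gy.
Proof.
move=> i; have := measurable_is_grad2 (0, delta_mx 0 i).
by apply: eq_measurable_fun => w _; rewrite /= dotv0r add0r dotv_delta.
Qed.

End GradientFamily.

Section Expectation.
Variable P : probability T R.
Implicit Types (X Y : T -> R).

Local Notation integrable X := (P.-integrable setT (EFin \o X)).

Lemma integrable_ge0_bounded X K : measurable_fun setT X ->
  (forall w, 0 <= X w) -> (Ex P X <= K%:E)%E -> integrable X.
Proof.
move=> mX X0 XK; apply/integrableP; split; first exact/measurable_EFinP.
rewrite (eq_integral (EFin \o X)) => [|w _]; last by rewrite /comp abse_EFin ger0_norm.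
exact: le_lt_trans XK (ltry _).
Qed.

Lemma integrable_cst b : integrable (fun _ => b).
Proof. exact: finite_measure_integrable_cst. Qed.

Lemma integrableD_EFin X Y : integrable X -> integrable Y -> integrable (X \+ Y).
Proof.
by move=> iX iY; apply: eq_integrable (integrableD _ iX iY).
Qed.

Lemma integrableZ_EFin a X : integrable X -> integrable (fun w => a * X w).
Proof.
by move=> iX; apply: eq_integrable (integrableZl _ a iX).
Qed.

Lemma integrableB_EFin X Y : integrable X -> integrable Y ->
  integrable (fun w => X w - Y w).
Proof.
by move=> iX iY; apply: eq_integrable (integrableB _ iX iY).
Qed.

Lemma integrable_sum_EFin (X : nat -> T -> R) n :
  (forall t, (t < n)%N -> integrable (X t)) ->
  integrable (fun w => \sum_(0 <= t < n) X t w).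
Proof.
move=> iX; have := @integrable_sum _ _ _ P _ measurableT _ (index_enum 'I_n) xpredT
  (fun t : 'I_n => EFin \o X t) (fun t _ => iX t (ltn_ord t)).
by apply: eq_integrable => // w _; rewrite /comp sumEFin big_mkord.
Qed.

Lemma Ex_fineK X : integrable X -> Ex P X = (fine (Ex P X))%:E.
Proof. by move=> iX; rewrite fineK // integrable_fin_num. Qed.

Lemma Ex_cst b : Ex P (fun _ => b) = b%:E.
Proof.
have bP : (b%:E * P setT = b%:E)%E by rewrite probability_setT mule1.
by rewrite -[RHS]bP; exact: integral_cst.
Qed.

Lemma ExD X Y : integrable X -> integrable Y -> Ex P (X \+ Y) = (Ex P X + Ex P Y)%E.
Proof. by move=> iX iY; rewrite -integralD_EFin. Qed.

Lemma ExB X Y : integrable X -> integrable Y ->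
  Ex P (fun w => X w - Y w) = (Ex P X - Ex P Y)%E.
Proof. by move=> iX iY; rewrite -integralB_EFin. Qed.

Lemma ExZ a X : integrable X -> Ex P (fun w => a * X w) = (a%:E * Ex P X)%E.
Proof. by move=> iX; rewrite -integralZl //; under eq_integral do rewrite EFinM. Qed.

Lemma Ex_sum (X : nat -> T -> R) n : (forall t, (t < n)%N -> integrable (X t)) ->
  Ex P (fun w => \sum_(0 <= t < n) X t w) = \sum_(0 <= t < n) Ex P (X t).
Proof.
move=> iX; rewrite /Ex; under eq_integral do rewrite -sumEFin big_mkord.
by rewrite integral_sum ?big_mkord // => t; exact: iX.
Qed.

Lemma le_Ex X Y : integrable X -> integrable Y -> (forall w, X w <= Y w) ->
  (Ex P X <= Ex P Y)%E.
Proof. by move=> iX iY XY; apply: le_integral => // w _; rewrite lee_fin. Qed.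

Lemma Ex_sum_le_combination (A B C : nat -> T -> R) (G : T -> R) (a b : R) n :
  (forall t, (t < n)%N -> integrable (A t)) ->
  (forall t, (t < n)%N -> integrable (B t)) ->
  (forall t, (t < n)%N -> integrable (C t)) -> integrable G ->
  (forall w, \sum_(0 <= t < n) A t w
     <= a * G w + \sum_(0 <= t < n) C t w - b * \sum_(0 <= t < n) B t w) ->
  (\sum_(0 <= t < n) Ex P (A t)
     <= a%:E * Ex P G + \sum_(0 <= t < n) Ex P (C t) - b%:E * \sum_(0 <= t < n) Ex P (B t))%E.
Proof.
move=> iA iB iC iG ABC.
have iSA := integrable_sum_EFin iA; have iSB := integrable_sum_EFin iB.
have iSC := integrable_sum_EFin iC.
rewrite -(Ex_sum iA) -(Ex_sum iB) -(Ex_sum iC) -ExZ // -ExD ?integrableZ_EFin //.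
rewrite -ExZ // -ExB ?integrableZ_EFin ?integrableD_EFin ?integrableZ_EFin //.
apply: le_Ex => //.
exact/integrableB_EFin/integrableZ_EFin/iSB/integrableD_EFin/iSC/integrableZ_EFin.
Qed.

End Expectation.

End MeasurableRow.

Section SmoothInY.
Variables (R : realType) (d1 d2 : nat).
Variables (dX : measure_display) (Xi : measurableType dX) (mu_xi : probability Xi R).
Variables (F : 'rV[R]_d1 -> 'rV[R]_d2 -> Xi -> R)
  (Gx : 'rV[R]_d1 -> 'rV[R]_d2 -> Xi -> 'rV[R]_d1)
  (Gy : 'rV[R]_d1 -> 'rV[R]_d2 -> Xi -> 'rV[R]_d2)
  (f : 'rV[R]_d1 -> 'rV[R]_d2 -> R)
  (gfx : 'rV[R]_d1 -> 'rV[R]_d2 -> 'rV[R]_d1)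
  (gfy : 'rV[R]_d1 -> 'rV[R]_d2 -> 'rV[R]_d2)
  (ell sigma : R).
Hypothesis F_grad :
  forall z x y, is_grad2 (fun p => F p.1 p.2 z) (x, y) (Gx x y z) (Gy x y z).
Hypothesis F_integrable : forall x y, mu_xi.-integrable setT (EFin \o F x y).
Hypothesis f_mean : forall x y, (f x y)%:E = Ex mu_xi (F x y).
Hypothesis f_grad : forall x y, is_grad2 (fun p => f p.1 p.2) (x, y) (gfx x y) (gfy x y).
Hypothesis ell_gt0 : 0 < ell.
Hypothesis G_lipschitz : forall x y x' y',
  (Ex mu_xi (fun z => sqn (Gx x y z - Gx x' y' z) + sqn (Gy x y z - Gy x' y' z))%R
    <= (ell ^+ 2 * (sqn (x - x') + sqn (y - y')))%:E)%E.
Hypothesis F_concave : forall z x, concave_fun (fun y => F x y z).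
Hypothesis f_concave : forall x, concave_fun (f x).
Hypothesis G_variance : forall x y,
  (Ex mu_xi (fun z => sqn (Gx x y z - gfx x y) + sqn (Gy x y z - gfy x y))%R
    <= (sigma ^+ 2)%:E)%E.

Implicit Types (x : 'rV[R]_d1) (y v h : 'rV[R]_d2).

Local Notation integrable X := (mu_xi.-integrable setT (EFin \o X)).

Lemma measurable_F x y : measurable_fun setT (F x y).
Proof. exact/measurable_EFinP/(measurable_int _ (F_integrable x y)). Qed.

Lemma measurable_Gx x y : measurable_rV (Gx x y).
Proof.
exact: (measurable_rV_is_grad2_x (H := fun z p => F p.1 p.2 z) (fun z => F_grad z x y)
         (fun p => measurable_F p.1 p.2)).
Qed.

Lemma measurable_Gy x y : measurable_rV (Gy x y).
Proof.
exact: (measurable_rV_is_grad2_y (H := fun z p => F p.1 p.2 z) (fun z => F_grad z x y)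
         (fun p => measurable_F p.1 p.2)).
Qed.

Lemma integrable_G_variance x y :
  integrable (fun z => sqn (Gx x y z - gfx x y) + sqn (Gy x y z - gfy x y)).
Proof.
apply: integrable_ge0_bounded (G_variance x y).
  by apply: measurable_funD; apply: measurable_sqn; apply: measurable_rVB;
    first [exact: measurable_Gx | exact: measurable_Gy | exact: measurable_rV_cst].
by move=> z; rewrite addr_ge0 ?sqn_ge0.
Qed.

Lemma integrable_G_lipschitz x y x' y' :
  integrable (fun z => sqn (Gx x y z - Gx x' y' z) + sqn (Gy x y z - Gy x' y' z)).
Proof.
apply: integrable_ge0_bounded (G_lipschitz x y x' y').
  by apply: measurable_funD; apply: measurable_sqn; apply: measurable_rVB;
    first [exact: measurable_Gx | exact: measurable_Gy].
by move=> z; rewrite addr_ge0 ?sqn_ge0.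
Qed.

Lemma integrable_Gy_dotv x y v : integrable (fun z => dotv (Gy x y z) v).
Proof.
apply: le_integrable (integrableD_EFin (integrable_G_variance x y)
          (integrable_cst _ (sqn v + `|dotv (gfy x y) v|))) => //.
  exact/measurable_EFinP/measurable_dotv/measurable_Gy.
move=> z _; rewrite /comp !abse_EFin lee_fin /=.
have -> : dotv (Gy x y z) v = dotv (Gy x y z - gfy x y) v + dotv (gfy x y) v.
  by rewrite -dotvDl subrK.
have := normr_dotv_le (Gy x y z - gfy x y) v.
have := sqn_ge0 (Gx x y z - gfx x y) => h1 h2.
rewrite [X in _ <= X]ger0_norm; last by rewrite !addr_ge0 ?sqn_ge0.
by apply: le_trans (ler_normD _ _) _; lra.
Qed.

Lemma dotv_gfy_le_Ex x y v :
  ((dotv (gfy x y) v)%:E <= Ex mu_xi (fun z => dotv (Gy x y z) v))%E.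
Proof.
have iG := integrable_Gy_dotv x y v.
rewrite (Ex_fineK iG) lee_fin; apply: cvgr_to_le (is_grad2_cvg_y (v := v) (f_grad x y)) _.
near=> s.
have s0 : 0 < s by near: s; exact: nbhs_right_gt.
rewrite ler_pdivrMr // lerBlDr /= [_ * s]mulrC [s * _ + _]addrC -lee_fin.
rewrite EFinD EFinM -(Ex_fineK iG) !f_mean -ExZ // -ExD //; last exact: integrableZ_EFin.
apply: le_Ex => //; first exact: integrableD_EFin (integrableZ_EFin _ iG).
move=> z /=; rewrite -dotvZr.
by have := concave_is_grad2_le (s *: v) (F_grad z x y) (F_concave z x).
Unshelve. all: by end_near.
Qed.

Lemma Ex_Gy_dotv x y v : Ex mu_xi (fun z => dotv (Gy x y z) v) = (dotv (gfy x y) v)%:E.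
Proof.
apply/le_anti/andP; split; last exact: dotv_gfy_le_Ex.
have := dotv_gfy_le_Ex x y (- v).
have -> : (fun z => dotv (Gy x y z) (- v)) = (fun z => -1 * dotv (Gy x y z) v).
  by apply/funext => z; rewrite dotvNr mulN1r.
by rewrite ExZ ?integrable_Gy_dotv // mulN1e dotvNr EFinN leeN2.
Qed.

(* (A2) combined with Young's inequality of weight [c], which avoids square roots. *)
Lemma gfy_lipschitz_young x a b h c : 0 < c ->
  - (c * (ell ^+ 2 * sqn (a - b)) + sqn h / c) / 2 <= dotv (gfy x a - gfy x b) h.
Proof.
move=> c0; pose D z := sqn (Gx x a z - Gx x b z) + sqn (Gy x a z - Gy x b z).
have iD : integrable D := integrable_G_lipschitz x a x b.
have := G_lipschitz x a x b; rewrite subrr sqn0 add0r (Ex_fineK iD) lee_fin.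
set J := fine _ => DJ.
rewrite -lee_fin dotvDl dotvNl EFinB -!Ex_Gy_dotv -ExB ?integrable_Gy_dotv //.
pose L := (fun z => - c / 2 * D z) \+ (fun _ => - (sqn h / c) / 2).
have EL : Ex mu_xi L = (- (c * J + sqn h / c) / 2)%:E.
  rewrite ExD; [| exact: integrableZ_EFin | exact: integrable_cst].
  rewrite ExZ // Ex_cst (Ex_fineK iD) -/J -EFinM -EFinD.
  by congr EFin; rewrite !mulNr -opprD mulrDl mulrAC.
apply: (@le_trans _ _ (Ex mu_xi L)).
  by rewrite EL lee_fin ler_pM2r ?invr_gt0 // lerN2 lerD2r ler_pM2l.
apply: le_Ex.
- exact: integrableD_EFin (integrableZ_EFin _ iD) (integrable_cst _ _).
- by apply: integrableB_EFin; exact: integrable_Gy_dotv.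
move=> z; have := dotv_ge_young (Gy x a z - Gy x b z) h c0.
have : c * sqn (Gy x a z - Gy x b z) <= c * D z.
  by rewrite ler_pM2l // lerDr sqn_ge0.
by rewrite /L /= dotvDl dotvNl; lra.
Qed.

Lemma f_increment_ge x y h s j : 0 < s ->
  s * dotv (gfy x y) h - ell * j.+1%:R * s ^+ 2 * sqn h
    <= f x (y + (j.+1%:R * s) *: h) - f x (y + (j%:R * s) *: h).
Proof.
move=> s0; set t := j.+1%:R * s; set a := y + t *: h.
have t0 : 0 < t by rewrite mulr_gt0 ?ltr0Sn.
have -> : y + (j%:R * s) *: h = a + (- s) *: h.
  by rewrite /a -addrA -scalerDl /t -natr1 mulrDl mul1r addrK.
have concave_step := concave_is_grad2_le ((- s) *: h) (f_grad x a) (f_concave x).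
have lip : - (ell * t * sqn h) <= dotv (gfy x a - gfy x y) h.
  have c0 : 0 < (ell * t)^-1 by rewrite invr_gt0 mulr_gt0.
  have := gfy_lipschitz_young x a y h c0.
  have -> : a - y = t *: h by rewrite /a addrAC subrr add0r.
  rewrite sqnZ.
  suff -> : (ell * t)^-1 * (ell ^+ 2 * (t ^+ 2 * sqn h)) + sqn h / (ell * t)^-1
            = ell * t * sqn h * 2 by rewrite mulNr mulfK.
  by field; rewrite mulf_neq0 // gt_eqF.
move: lip; rewrite -(ler_pM2l s0).
have -> : ell * j.+1%:R * s ^+ 2 * sqn h = s * (ell * t * sqn h) by rewrite /t; ring.
rewrite dotvDl dotvNl /= dotvZr in concave_step *.
lra.
Qed.

Lemma f_chord_ge x y h s j : 0 < s ->
  j%:R * s * dotv (gfy x y) h - ell * sqn h * s ^+ 2 * (j%:R * j.+1%:R) / 2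
    <= f x (y + (j%:R * s) *: h) - f x y.
Proof.
move=> s0; elim: j => [|j IH].
  by rewrite (_ : 0%:R = 0 :> R) // !mul0r mulr0 mul0r scale0r addr0 !subrr.
have := f_increment_ge x y h j s0.
suff -> : j.+1%:R * s * dotv (gfy x y) h
            - ell * sqn h * s ^+ 2 * (j.+1%:R * j.+2%:R) / 2
          = (j%:R * s * dotv (gfy x y) h - ell * sqn h * s ^+ 2 * (j%:R * j.+1%:R) / 2)
            + (s * dotv (gfy x y) h - ell * j.+1%:R * s ^+ 2 * sqn h).
  by lra.
by rewrite -[j.+2]addn1 -[j.+1]addn1 !natrD; field.
Qed.

Lemma f_descent x y h : f x y + dotv (gfy x y) h - ell / 2 * sqn h <= f x (y + h).
Proof.
set c := f x y + dotv (gfy x y) h - ell / 2 * sqn h.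
have u_cvg : (fun N => c - ell / 2 * sqn h * harmonic N) @ \oo --> c.
  by rewrite -[X in _ --> X]subr0 -(mulr0 (ell / 2 * sqn h));
    apply: cvgB; [exact: cvg_cst | apply: cvgM; [exact: cvg_cst | exact: cvg_harmonic]].
apply: cvgr_to_le u_cvg _; near=> N.
have := f_chord_ge x y h N.+1 (harmonic_gt0 N).
rewrite /harmonic /= mulfV ?pnatr_eq0 // scale1r mul1r /c.
suff -> : ell * sqn h * N.+1%:R^-1 ^+ 2 * (N.+1%:R * N.+2%:R) / 2
          = ell / 2 * sqn h + ell / 2 * sqn h / N.+1%:R.
  by set e := ell / 2 * sqn h / _; lra.
by rewrite -[N.+2]addn1 natrD; field; rewrite nat1r pnatr_eq0.
Unshelve. all: by end_near.
Qed.

Lemma descent_step x y u lam :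
  lam / 2 * (sqn (gfy x y) + (1 - ell * lam) * sqn u - sqn (gfy x y - u))
    <= f x (y + lam *: u) - f x y.
Proof.
have := f_descent x y (lam *: u); rewrite dotvZr sqnZ.
rewrite sqnD sqnN dotvNr; set G := dotv _ u; set A := sqn (gfy x y); set B := sqn u.
suff -> : lam / 2 * (A + (1 - ell * lam) * B - (A + 2 * - G + B))
          = lam * G - ell / 2 * (lam ^+ 2 * B) by lra.
by field.
Qed.

Lemma descent_telescope x (ys uhat : nat -> 'rV[R]_d2) ystar lam n : 0 < lam ->
  (forall t, ys t.+1 = ys t - lam *: uhat t) -> (forall y, - f x ystar <= - f x y) ->
  \sum_(0 <= t < n) sqn (- gfy x (ys t))
    <= 2 / lam * (- f x (ys 0%N) - - f x ystar)
       + \sum_(0 <= t < n) sqn (- gfy x (ys t) - uhat t)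
       - (1 - ell * lam) * \sum_(0 <= t < n) sqn (uhat t).
Proof.
move=> lam0 ys_step ystar_min.
set k := 1 - ell * lam.
have gain : lam / 2 * \sum_(0 <= t < n)
    (sqn (- gfy x (ys t)) + k * sqn (uhat t) - sqn (- gfy x (ys t) - uhat t))
    <= - f x (ys 0%N) - - f x ystar.
  rewrite mulr_sumr.
  apply: (@le_trans _ _ (\sum_(0 <= t < n) (f x (ys t.+1) - f x (ys t)))).
    apply: ler_sum => t _; rewrite ys_step -scalerN sqnN -opprD sqnN.
    by have := descent_step x (ys t) (- uhat t) lam; rewrite opprK sqnN.
  by rewrite telescope_sumr // opprK addrC lerD2l -lerN2 ystar_min.
have h2 : 0 <= 2 / lam by rewrite divr_ge0 // ltW.
have := ler_wpM2l h2 gain.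
rewrite mulrA (_ : 2 / lam * (lam / 2) = 1) ?mul1r; last by field; rewrite gt_eqF.
rewrite sumrB big_split /= -mulr_sumr.
set SA := \sum_(_ <= _ < _) _; set SB := \sum_(_ <= _ < _) _.
by set SC := \sum_(_ <= _ < _) _; lra.
Qed.

End SmoothInY.

Unset Implicit Arguments.

Theorem lemma9
  (R : realType) (d1 d2 : nat)
  (* law of xi: a probability measure on the sample space Xi *)
  (dX : measure_display) (Xi : measurableType dX) (mu_xi : probability Xi R)
  (F : 'rV[R]_d1 -> 'rV[R]_d2 -> Xi -> R)
  (Gx : 'rV[R]_d1 -> 'rV[R]_d2 -> Xi -> 'rV[R]_d1)
  (Gy : 'rV[R]_d1 -> 'rV[R]_d2 -> Xi -> 'rV[R]_d2)
  (f : 'rV[R]_d1 -> 'rV[R]_d2 -> R)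
  (gfx : 'rV[R]_d1 -> 'rV[R]_d2 -> 'rV[R]_d1)
  (gfy : 'rV[R]_d1 -> 'rV[R]_d2 -> 'rV[R]_d2)
  (ell mu sigma : R)
  (* F(.,.;xi) is differentiable with gradient (G_x, G_y) *)
  (HGF : forall z x y, is_grad2 (fun p => F p.1 p.2 z) (x, y) (Gx x y z) (Gy x y z))
  (HGmeas : forall x y (i : 'I_d1) (j : 'I_d2),
      measurable_fun setT (fun z => Gx x y z 0 i) /\
      measurable_fun setT (fun z => Gy x y z 0 j))
  (* f = E[F(.,.;xi)] *)
  (HFint : forall x y, mu_xi.-integrable setT (fun z => (F x y z)%:E))
  (Hf : forall x y, (f x y)%:E = (\int[mu_xi]_z (F x y z)%:E)%E)
  (* f is differentiable with gradient (gfx, gfy) *)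
  (Hgf : forall x y, is_grad2 (fun p => f p.1 p.2) (x, y) (gfx x y) (gfy x y))
  (* (A2) mean-squared Lipschitz gradients *)
  (Hell : 0 < ell)
  (HA2 : forall x y x' y',
      (\int[mu_xi]_z (sqn (Gx x y z - Gx x' y' z) + sqn (Gy x y z - Gy x' y' z))%:E
        <= (ell ^+ 2 * (sqn (x - x') + sqn (y - y')))%:E)%E)
  (* (A3) F(x,.;xi) concave *)
  (HA3 : forall z x, concave_fun (fun y => F x y z))
  (* (A4) f(x,.) mu-strongly concave *)
  (Hmu : 0 < mu)
  (HA4 : forall x, strongly_concave mu (f x))
  (* max_y f(., y) bounded below *)
  (Hlow : exists c : R, forall x,
      (c%:E <= ereal_sup [set (f x y)%:E | y in [set: 'rV[R]_d2]])%E)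
  (* bounded variance *)
  (HA5 : forall x y,
      (\int[mu_xi]_z (sqn (Gx x y z - gfx x y) + sqn (Gy x y z - gfy x y))%:E
        <= (sigma ^+ 2)%:E)%E)
  (* the underlying probability space and the random inputs of the inner loop *)
  (dO : measure_display) (Omega : measurableType dO) (P : probability Omega R)
  (lam : R) (Hlam : 0 < lam) (S2 m : nat) (HS2 : (0 < S2)%N)
  (xk xk1 vk : Omega -> 'rV[R]_d1) (yk uk : Omega -> 'rV[R]_d2)
  (xi : nat -> nat -> Omega -> Xi)
  (* each sample xi_{t,i} is a copy of xi ... *)
  (Hxi_meas : forall t i, measurable_fun setT (xi t i))
  (Hxi_law : forall t i (B : set Xi), measurable B ->
      P (xi t i @^-1` B) = mu_xi B)
  (* ... and the samples are mutually independent and independent of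
     x_k, y_k, v_k, u_k, x_{k+1} *)
  (Hindep : indep_samples P
      (<<s vec_events xk `|` vec_events yk `|` vec_events vk `|`
           vec_events uk `|` vec_events xk1 >>) xi m.+1 S2)
  (* y~_k^* = argmin_y g(y), where g(y) = - f(x_{k+1}, y) *)
  (ystar : Omega -> 'rV[R]_d2)
  (Hystar : forall w y, - f (xk1 w) (ystar w) <= - f (xk1 w) y) :
  let ys w t := ytil Gx Gy lam S2 (fun t i => xi t i w)
                    (xk w) (yk w) (vk w) (uk w) (xk1 w) t in
  let uhat w t := - util Gx Gy lam S2 (fun t i => xi t i w)
                      (xk w) (yk w) (vk w) (uk w) (xk1 w) t in
  let g w y := - f (xk1 w) y in
  let gradg w y := - gfy (xk1 w) y in
  (* the expectations involved are finite *)
  (forall t, (t <= m)%N ->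
     P.-integrable setT (fun w => (sqn (gradg w (ys w t)))%:E) /\
     P.-integrable setT (fun w => (sqn (gradg w (ys w t) - uhat w t))%:E) /\
     P.-integrable setT (fun w => (sqn (uhat w t))%:E)) ->
  P.-integrable setT (fun w => (g w (ys w 0%N) - g w (ystar w))%:E) ->
  (\sum_(0 <= t < m.+1) Ex P (fun w => sqn (gradg w (ys w t)))
   <= (2 / lam)%:E * Ex P (fun w => g w (ys w 0%N) - g w (ystar w))%R
      + \sum_(0 <= t < m.+1) Ex P (fun w => sqn (gradg w (ys w t) - uhat w t)%R)
      - (1 - ell * lam)%:E * \sum_(0 <= t < m.+1) Ex P (fun w => sqn (uhat w t)))%E.
Proof.
move=> ys uhat g gradg integrable_terms integrable_gap.
have ys_step w t : ys w t.+1 = ys w t - lam *: uhat w t.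
  by rewrite scalerN opprK /ys /ytil /uhat /util /=; case: inner_state => [[[? ?] ?] ?].
have pathwise w :
    \sum_(0 <= t < m.+1) sqn (gradg w (ys w t))
    <= 2 / lam * (g w (ys w 0%N) - g w (ystar w))
       + \sum_(0 <= t < m.+1) sqn (gradg w (ys w t) - uhat w t)
       - (1 - ell * lam) * \sum_(0 <= t < m.+1) sqn (uhat w t).
  have f_concave x := strongly_concave_concave Hmu (HA4 x).
  exact: (descent_telescope HGF HFint Hf Hgf Hell HA2 HA3 f_concave HA5
            m.+1 Hlam (ys_step w) (Hystar w)).
apply: (Ex_sum_le_combination (A := fun t w => sqn (gradg w (ys w t))))
  integrable_gap pathwise => t /integrable_terms [? [? ?]] //.
Qed.
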